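(* Let $\nu(x)=\sum_{k\ge0}\nu_kL_k(x)$ and $\sigma(x)=\sum_{k\ge0}\sigma_kL_k(x)$ on $I=(-1,1)$ and, for $m,n\ge2$, let $$a_{m,n}:=\int_{-1}^1\nu\,D\eta_m\,D\eta_n\,dx+\int_{-1}^1\sigma\,\eta_m\,\eta_n\,dx.$$ If there exist $\eta>0$ and a constant $C_\eta>0$ depending only on $\eta$ such that $|\nu_k|,|\sigma_k|\le C_\eta e^{-\eta k}$ for all $k\ge0$, then $|a_{m,n}|\le Ce^{-\eta|n-m|}$ for all $n,m\ge2$, where $C$ is a constant depending only on $\eta$.
   Context: $I=(-1,1)$, $D=d/dx$. $L_k$ denotes the Legendre polynomial of degree $k$ with $L_k(1)=1$. The Babuška–Shen basis is $\eta_k(x)=\frac{1}{\sqrt{4k-2}}(L_{k-2}(x)-L_k(x))$, $k\ge2$. *)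

From Stdlib Require Import Reals Lra.
From Coquelicot Require Import Coquelicot.
Open Scope R_scope.

(* leg_pair n x = (L_n x, L_{n+1} x), via Bonnet's recurrence
   (k+1) L_{k+1} = (2k+1) x L_k - k L_{k-1},  L_0 = 1, L_1 = x. *)
Fixpoint leg_pair (n : nat) (x : R) : R * R :=
  match n with
  | O => (1, x)
  | S p =>
      let (a, b) := leg_pair p x in
      (b, ((2 * INR p + 3) * x * b - (INR p + 1) * a) / (INR p + 2))
  end.

(* Legendre polynomial of degree k, normalized by L_k(1) = 1. *)
Definition Legendre (k : nat) (x : R) : R := fst (leg_pair k x).

Definition bs_eta (k : nat) (x : R) : R :=
  / sqrt (4 * INR k - 2) * (Legendre (k - 2) x - Legendre k x).

Definition leg_series (c : nat -> R) (x : R) : R :=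
  Series (fun k => c k * Legendre k x).

Definition a_mn (nu sigma : nat -> R) (m n : nat) : R :=
  RInt (fun x => leg_series nu x * Derive (bs_eta m) x * Derive (bs_eta n) x) (-1) 1
  + RInt (fun x => leg_series sigma x * bs_eta m x * bs_eta n x) (-1) 1.

(* Bonnet's recurrence gives D(L_{j+2} - L_j) = (2j+3) L_{j+1}.  Hence D eta_m is a multiple of
   L_{m-1} normalised by int (D eta_m)^2 = 1, and integrating by parts against L_{j+2} - L_j shows
   that L_N is orthogonal to every polynomial of degree < N.  A discrete Lyapunov function for the
   recurrence gives |L_k| <= 1 on [-1,1], so the Legendre series of nu and sigma converge uniformly
   there and can be integrated termwise.  In a_{m,n} (m <= n) the k-th term of the stiffness part
   vanishes for k < n - m and is at most C_eta e^{-eta k}; that of the mass part vanishes for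
   k < n - m - 2 and is at most 2 C_eta e^{-eta k}.  Summing the geometric tails gives the bound
   with C = C_eta (1 + 2 e^{2 eta}) / (1 - e^{-eta}). *)

From Stdlib Require Import Reals Lra Lia.
From Coquelicot Require Import Coquelicot.
Open Scope R_scope.

Notation L := Legendre.

(** * Bonnet's recurrence and the bound [|L_n| <= 1] *)

Lemma INR_add2_pos n : 0 < INR n + 2.
Proof. pose proof (pos_INR n). lra. Qed.

Lemma Legendre_0 x : L 0 x = 1.
Proof. reflexivity. Qed.

Lemma Legendre_1 x : L 1 x = x.
Proof. reflexivity. Qed.

Lemma Legendre_SS n x :
  L (S (S n)) x = ((2 * INR n + 3) * x * L (S n) x - (INR n + 1) * L n x) / (INR n + 2).
Proof.
  unfold Legendre. cbn [leg_pair fst]. now destruct (leg_pair n x).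
Qed.

Lemma Legendre_rec k x :
  (INR k + 1) * L (S k) x = (2 * INR k + 1) * x * L k x - INR k * L (k - 1) x.
Proof.
  destruct k as [|j].
  - rewrite Legendre_1, Legendre_0. simpl. ring.
  - rewrite Legendre_SS. replace (S j - 1)%nat with j by lia. rewrite S_INR.
    pose proof (INR_add2_pos j). field. lra.
Qed.

Lemma Legendre_at_1 n : L n 1 = 1.
Proof.
  enough (H : L n 1 = 1 /\ L (S n) 1 = 1) by apply H.
  induction n as [|n [IH1 IH2]]; [now split|].
  split; [exact IH2|]. rewrite Legendre_SS, IH1, IH2.
  pose proof (INR_add2_pos n). field. lra.
Qed.

Lemma Legendre_at_m1 n : L n (-1) = (-1) ^ n.
Proof.
  enough (H : L n (-1) = (-1) ^ n /\ L (S n) (-1) = (-1) ^ S n) by apply H.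
  induction n as [|n [IH1 IH2]]; [split; [reflexivity | rewrite Legendre_1; ring]|].
  split; [exact IH2|]. rewrite Legendre_SS, IH1, IH2.
  pose proof (INR_add2_pos n). simpl pow. field. lra.
Qed.

Definition Legendre_energy n x :=
  (INR n + 2) * (1 - x * x) * L (S n) x ^ 2 + (INR n + 1) * (L n x - x * L (S n) x) ^ 2.

Lemma Legendre_energy_decr n x :
  Legendre_energy (S n) x / (INR n + 3) <= Legendre_energy n x / (INR n + 2).
Proof.
  unfold Legendre_energy. rewrite Legendre_SS, S_INR.
  set (a := L n x); set (b := L (S n) x); set (N := INR n + 1).
  assert (HN : 0 < N) by (unfold N; pose proof (pos_INR n); lra).
  replace (INR n + 2) with (N + 1) by (unfold N; ring).
  replace (INR n + 3) with (N + 2) by (unfold N; ring).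
  replace (INR n + 1 + 2) with (N + 2) by (unfold N; ring).
  replace (INR n + 1 + 1) with (N + 1) by (unfold N; ring).
  replace (2 * INR n + 3) with (2 * N + 1) by (unfold N; ring).
  set (s := 1 - x * x); set (p := N / (N + 1)); set (u := a - x * b).
  (* the energy decreases by the sum of squares [D / (N + 2)] *)
  set (D := (s * b + x * p * u) ^ 2 + p * (2 - p) * u ^ 2).
  assert (Hp : 0 <= p <= 1).
  { unfold p. split; [apply Rdiv_le_0_compat; lra|].
    apply Rmult_le_reg_r with (N + 1); [lra|]. field_simplify; lra. }
  assert (HD : 0 <= D / (N + 2)).
  { apply Rdiv_le_0_compat; [|lra]. unfold D.
    pose proof (pow2_ge_0 (s * b + x * p * u)). pose proof (pow2_ge_0 u). nra. }
  enough (E : ((N + 2) * s * (((2 * N + 1) * x * b - N * a) / (N + 1)) ^ 2 +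
      (N + 1) * (b - x * (((2 * N + 1) * x * b - N * a) / (N + 1))) ^ 2) / (N + 2)
      = ((N + 1) * s * b ^ 2 + N * u ^ 2) / (N + 1) - D / (N + 2)) by lra.
  unfold D, p, u, s. field. lra.
Qed.

Lemma Legendre_energy_le n x : -1 <= x <= 1 -> Legendre_energy n x / (INR n + 2) <= 1 - x * x.
Proof.
  intros Hx. induction n as [|n IH].
  - unfold Legendre_energy. rewrite Legendre_1, Legendre_0. simpl.
    assert (0 <= 1 - x * x) by nra. nra.
  - eapply Rle_trans; [|exact IH].
    replace (INR (S n) + 2) with (INR n + 3) by (rewrite S_INR; ring).
    apply Legendre_energy_decr.
Qed.

Lemma Legendre_bound n x : -1 <= x <= 1 -> Rabs (L n x) <= 1.
Proof.
  intros Hx.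
  destruct (Req_dec x 1) as [->|H1]; [rewrite Legendre_at_1, Rabs_R1; lra|].
  destruct (Req_dec x (-1)) as [->|H2]; [rewrite Legendre_at_m1, pow_1_abs; lra|].
  destruct n as [|n]; [rewrite Legendre_0, Rabs_R1; lra|].
  pose proof (Legendre_energy_le n x Hx) as H. unfold Legendre_energy in H.
  assert (Hs : 0 < 1 - x * x) by nra.
  pose proof (INR_add2_pos n) as Hn.
  pose proof (pow2_ge_0 (L n x - x * L (S n) x)). pose proof (pos_INR n).
  apply Rmult_le_compat_r with (r := INR n + 2) in H; [|lra].
  unfold Rdiv in H. rewrite Rmult_assoc, Rinv_l in H by lra.
  assert (Hq : (1 - x * x) * L (S n) x ^ 2 <= (1 - x * x) * 1) by nra.
  apply Rmult_le_reg_l in Hq; [|exact Hs].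
  apply Rabs_le. nra.
Qed.

(* The generic rules, stated over normed modules with [plus], [scal], [one], ..., do not unify
   with goals written with [Rplus], [Rmult] and real constants; these are their instances. *)
Lemma is_derive_eq (f : R -> R) (x l l' : R) : is_derive f x l -> l = l' -> is_derive f x l'.
Proof. now intros H <-. Qed.

Lemma is_derive_ext_R (f g : R -> R) (x l : R) :
  (forall y, f y = g y) -> is_derive f x l -> is_derive g x l.
Proof. apply is_derive_ext. Qed.

Lemma is_derive_const_R (c x : R) : is_derive (fun _ => c) x 0.
Proof. apply (is_derive_const c). Qed.

Lemma is_derive_id_R (x : R) : is_derive (fun y : R => y) x 1.
Proof. apply (is_derive_id x). Qed.

Lemma is_derive_plus_R (f g : R -> R) (x df dg : R) :
  is_derive f x df -> is_derive g x dg -> is_derive (fun y => f y + g y) x (df + dg).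
Proof. apply (is_derive_plus f g). Qed.

Lemma is_derive_minus_R (f g : R -> R) (x df dg : R) :
  is_derive f x df -> is_derive g x dg -> is_derive (fun y => f y - g y) x (df - dg).
Proof. apply (is_derive_minus f g). Qed.

Lemma is_derive_scal_R (f : R -> R) (c x df : R) :
  is_derive f x df -> is_derive (fun y => c * f y) x (c * df).
Proof. apply (is_derive_scal f). Qed.

Lemma is_derive_mult_R (f g : R -> R) (x df dg : R) :
  is_derive f x df -> is_derive g x dg -> is_derive (fun y => f y * g y) x (df * g x + f x * dg).
Proof. intros Hf Hg. apply (is_derive_mult f g); auto. intros; apply Rmult_comm. Qed.

Lemma continuous_plus_R (f g : R -> R) (x : R) :
  continuous f x -> continuous g x -> continuous (fun y => f y + g y) x.
Proof. apply (continuous_plus f g). Qed.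

Lemma continuous_minus_R (f g : R -> R) (x : R) :
  continuous f x -> continuous g x -> continuous (fun y => f y - g y) x.
Proof. apply (continuous_minus f g). Qed.

Lemma continuous_mult_R (f g : R -> R) (x : R) :
  continuous f x -> continuous g x -> continuous (fun y => f y * g y) x.
Proof. apply (continuous_mult f g). Qed.

Lemma continuous_Rabs_R (f : R -> R) (x : R) :
  continuous f x -> continuous (fun y => Rabs (f y)) x.
Proof.
  intros Hf. apply (continuous_comp f Rabs); [exact Hf|apply (continuous_abs (K := R_AbsRing))].
Qed.

(* [RInt] is valued in [CompleteNormedModule.sort _ R_CompleteNormedModule], which [ring] and
   [field] do not recognise as [R]. *)
Ltac R_eq := match goal with |- @eq _ ?a ?b => change (@eq R a b) end.

Lemma RInt_ext_R (f g : R -> R) a b :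
  (forall x, Rmin a b < x < Rmax a b -> f x = g x) -> RInt f a b = RInt g a b.
Proof. apply RInt_ext. Qed.

Lemma RInt_plus_R (f g : R -> R) a b : ex_RInt f a b -> ex_RInt g a b ->
  RInt (fun x => f x + g x) a b = RInt f a b + RInt g a b.
Proof. apply (RInt_plus f g). Qed.

Lemma RInt_minus_R (f g : R -> R) a b : ex_RInt f a b -> ex_RInt g a b ->
  RInt (fun x => f x - g x) a b = RInt f a b - RInt g a b.
Proof. apply (RInt_minus f g). Qed.

Lemma RInt_scal_R (f : R -> R) a b c : ex_RInt f a b ->
  RInt (fun x => c * f x) a b = c * RInt f a b.
Proof. apply (RInt_scal f). Qed.

(** * Derivatives of Legendre polynomials *)

Fixpoint DLegendre (n : nat) (x : R) : R :=
  match n with O => 0 | S p => x * DLegendre p x + INR (S p) * L p x end.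

Lemma DLegendre_rec n x :
  x * DLegendre (S n) x - DLegendre n x = INR (S n) * L (S n) x /\
  (x * x - 1) * DLegendre (S n) x = INR (S n) * (x * L (S n) x - L n x).
Proof.
  induction n as [|n [IH1 IH2]].
  - simpl. rewrite Legendre_1, Legendre_0. split; ring.
  - pose proof (INR_add2_pos n) as Hn.
    change (DLegendre (S (S n)) x) with (x * DLegendre (S n) x + INR (S (S n)) * L (S n) x).
    assert (HL : (INR n + 2) * L (S (S n)) x
                 = (2 * INR n + 3) * x * L (S n) x - (INR n + 1) * L n x).
    { rewrite Legendre_SS. field. lra. }
    rewrite !S_INR in *. split.
    + replace (x * (x * DLegendre (S n) x + (INR n + 1 + 1) * L (S n) x) - DLegendre (S n) x)
        with ((x * x - 1) * DLegendre (S n) x + (INR n + 1 + 1) * x * L (S n) x) by ring.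
      rewrite IH2. lra.
    + replace ((x * x - 1) * (x * DLegendre (S n) x + (INR n + 1 + 1) * L (S n) x))
        with (x * ((x * x - 1) * DLegendre (S n) x) + (INR n + 1 + 1) * (x * x - 1) * L (S n) x)
        by ring.
      rewrite IH2.
      replace ((INR n + 1 + 1) * (x * L (S (S n)) x - L (S n) x))
        with (x * ((INR n + 2) * L (S (S n)) x) - (INR n + 2) * L (S n) x) by ring.
      rewrite HL. ring.
Qed.

Lemma DLegendre_SS_sub n x :
  DLegendre (S (S n)) x - DLegendre n x = (2 * INR n + 3) * L (S n) x.
Proof.
  destruct (DLegendre_rec n x) as [E _].
  change (DLegendre (S (S n)) x) with (x * DLegendre (S n) x + INR (S (S n)) * L (S n) x).
  rewrite !S_INR in *. lra.
Qed.

Lemma is_derive_Legendre n (x : R) : is_derive (L n) x (DLegendre n x).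
Proof.
  revert x.
  enough (H : (forall x : R, is_derive (L n) x (DLegendre n x)) /\
              (forall x : R, is_derive (L (S n)) x (DLegendre (S n) x))) by apply H.
  induction n as [|n [IH1 IH2]]; split; intros x.
  - apply (is_derive_ext_R (fun _ => 1)); [reflexivity|]. apply is_derive_const_R.
  - apply (is_derive_ext_R (fun y => y)); [reflexivity|].
    eapply is_derive_eq; [apply is_derive_id_R|]. simpl. rewrite Legendre_0. ring.
  - apply IH2.
  - pose proof (INR_add2_pos n) as Hn.
    apply (is_derive_ext_R (fun y => / (INR n + 2) *
             ((2 * INR n + 3) * y * L (S n) y - (INR n + 1) * L n y))).
    { intros y. rewrite Legendre_SS. unfold Rdiv. ring. }
    eapply is_derive_eq.
    { apply is_derive_scal_R, is_derive_minus_R.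
      - apply is_derive_mult_R; [|apply IH2]. apply is_derive_scal_R, is_derive_id_R.
      - apply is_derive_scal_R, IH1. }
    destruct (DLegendre_rec n x) as [E _].
    change (DLegendre (S (S n)) x) with (x * DLegendre (S n) x + INR (S (S n)) * L (S n) x).
    replace (DLegendre n x) with (x * DLegendre (S n) x - INR (S n) * L (S n) x) by lra.
    rewrite !S_INR. field. lra.
Qed.

Lemma Legendre_continuous n (x : R) : continuous (L n) x.
Proof.
  apply (ex_derive_continuous (K := R_AbsRing) (L n) x).
  exists (DLegendre n x). apply is_derive_Legendre.
Qed.

Ltac solve_continuous :=
  repeat match goal with
  | |- continuous (fun _ => _ - _) _ => apply continuous_minus_R
  | |- continuous (fun _ => _ + _) _ => apply continuous_plus_R
  | |- continuous (fun _ => _ * _) _ => apply continuous_mult_R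
  | |- continuous (fun _ => Rabs _) _ => apply continuous_Rabs_R
  | |- continuous (fun y => y) _ => apply continuous_id
  | |- continuous (fun _ => L _ _) _ => apply Legendre_continuous
  | |- continuous (L _) _ => apply Legendre_continuous
  | |- continuous (fun _ => ?c) _ => apply continuous_const
  | H : forall x, continuous ?f x |- continuous (fun _ => ?f _) _ => apply H
  | H : forall x, continuous ?f x |- continuous ?f _ => apply H
  end.

Ltac solve_ex_RInt :=
  apply (ex_RInt_continuous (V := R_CompleteNormedModule)); intros; solve_continuous.

(** * Polynomial functions *)

Fixpoint poly_deg_le (d : nat) (f : R -> R) : Prop :=
  match d with
  | O => exists c, forall x, f x = c
  | S d' => exists c g, poly_deg_le d' g /\ forall x, f x = c + x * g x
  end.

Lemma poly_deg_le_ext d : forall f g, (forall x, f x = g x) -> poly_deg_le d f -> poly_deg_le d g.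
Proof.
  induction d as [|d IH]; intros f g E.
  - intros [c Hc]. exists c. intros x. now rewrite <- E.
  - intros (c & h & Hh & Hf). exists c, h. split; [exact Hh|]. intros x. now rewrite <- E.
Qed.

Lemma poly_deg_le_S d : forall f, poly_deg_le d f -> poly_deg_le (S d) f.
Proof.
  induction d as [|d IH]; intros f.
  - intros [c Hc]. exists c, (fun _ => 0). split; [now exists 0|]. intros x. rewrite Hc. ring.
  - intros (c & g & Hg & Hf). exists c, g. split; [now apply IH|exact Hf].
Qed.

Lemma poly_deg_le_weaken d d' f : (d <= d')%nat -> poly_deg_le d f -> poly_deg_le d' f.
Proof. intros Hle. induction Hle; auto using poly_deg_le_S. Qed.

Lemma poly_deg_le_plus d : forall f g,
  poly_deg_le d f -> poly_deg_le d g -> poly_deg_le d (fun x => f x + g x).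
Proof.
  induction d as [|d IH]; intros f g.
  - intros [c Hc] [c' Hc']. exists (c + c'). intros x. now rewrite Hc, Hc'.
  - intros (c & f1 & H1 & E1) (c' & g1 & H2 & E2).
    exists (c + c'), (fun x => f1 x + g1 x). split; [now apply IH|].
    intros x. rewrite E1, E2. ring.
Qed.

Lemma poly_deg_le_scal d : forall a f, poly_deg_le d f -> poly_deg_le d (fun x => a * f x).
Proof.
  induction d as [|d IH]; intros a f.
  - intros [c Hc]. exists (a * c). intros x. now rewrite Hc.
  - intros (c & f1 & H1 & E1). exists (a * c), (fun x => a * f1 x). split; [now apply IH|].
    intros x. rewrite E1. ring.
Qed.

Lemma poly_deg_le_minus d f g :
  poly_deg_le d f -> poly_deg_le d g -> poly_deg_le d (fun x => f x - g x).
Proof.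
  intros Hf Hg. apply (poly_deg_le_ext d (fun x => f x + -1 * g x)); [intros; ring|].
  now apply poly_deg_le_plus, poly_deg_le_scal.
Qed.

Lemma poly_deg_le_mulx d f : poly_deg_le d f -> poly_deg_le (S d) (fun x => x * f x).
Proof. intros Hf. exists 0, f. split; [exact Hf|]. intros; ring. Qed.

Lemma poly_deg_le_mult a : forall b f g,
  poly_deg_le a f -> poly_deg_le b g -> poly_deg_le (a + b) (fun x => f x * g x).
Proof.
  induction a as [|a IH]; intros b f g Hf Hg.
  - destruct Hf as [c Hc]. apply (poly_deg_le_ext b (fun x => c * g x)).
    + intros x. now rewrite Hc.
    + now apply poly_deg_le_scal.
  - destruct Hf as (c & f1 & H1 & E1).
    apply (poly_deg_le_ext (S (a + b)) (fun x => c * g x + x * (f1 x * g x))).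
    { intros x. rewrite E1. ring. }
    apply poly_deg_le_plus.
    + apply poly_deg_le_weaken with b; [lia|]. now apply poly_deg_le_scal.
    + now apply poly_deg_le_mulx, IH.
Qed.

Lemma poly_deg_le_derive d : forall f, poly_deg_le (S d) f ->
  exists f', poly_deg_le d f' /\ forall x : R, is_derive f x (f' x).
Proof.
  induction d as [|d IH]; intros f.
  - intros (c & g & [c' Hg] & E). exists (fun _ => c'). split; [now exists c'|].
    intros x. apply (is_derive_ext_R (fun y => c + c' * y)); [intros; rewrite E, Hg; ring|].
    eapply is_derive_eq.
    + apply is_derive_plus_R; [apply is_derive_const_R|].
      apply is_derive_scal_R, is_derive_id_R.
    + ring.
  - intros (c & g & Hg & E). destruct (IH g Hg) as (g' & Hg' & Dg).
    exists (fun x => g x + x * g' x). split.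
    + apply poly_deg_le_plus; [exact Hg|now apply poly_deg_le_mulx].
    + intros x. apply (is_derive_ext_R (fun y => c + y * g y)); [intros; now rewrite E|].
      eapply is_derive_eq.
      * apply is_derive_plus_R; [apply is_derive_const_R|].
        apply is_derive_mult_R; [apply is_derive_id_R|apply Dg].
      * cbv beta. ring.
Qed.

Lemma poly_deg_le_continuous d f (x : R) : poly_deg_le d f -> continuous f x.
Proof.
  intros H. destruct (poly_deg_le_derive d f (poly_deg_le_S d f H)) as (f' & _ & Df).
  apply (ex_derive_continuous (K := R_AbsRing) f x). exists (f' x). apply Df.
Qed.

Lemma poly_deg_le_Legendre n : poly_deg_le n (L n).
Proof.
  enough (H : poly_deg_le n (L n) /\ poly_deg_le (S n) (L (S n))) by apply H.
  induction n as [|n [IH1 IH2]].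
  - split; [now exists 1|].
    apply (poly_deg_le_ext _ (fun x => x * 1)); [intros; rewrite Legendre_1; ring|].
    apply poly_deg_le_mulx. now exists 1.
  - split; [exact IH2|].
    apply (poly_deg_le_ext _ (fun x => (2 * INR n + 3) / (INR n + 2) * (x * L (S n) x)
                                       - (INR n + 1) / (INR n + 2) * L n x)).
    { intros x. rewrite Legendre_SS. pose proof (INR_add2_pos n). field. lra. }
    apply poly_deg_le_minus; apply poly_deg_le_scal.
    + now apply poly_deg_le_mulx.
    + apply poly_deg_le_weaken with n; [lia|exact IH1].
Qed.

(** * Orthogonality and norms *)

(* [L_{j+2} - L_j] vanishes at [±1] and has derivative [(2j+3) L_{j+1}]. *)
Lemma RInt_Legendre_by_parts j (q q' : R -> R) :
  (forall x, is_derive q x (q' x)) -> (forall x, continuous q x) -> (forall x, continuous q' x) ->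
  (2 * INR j + 3) * RInt (fun x => L (S j) x * q x) (-1) 1
  = RInt (fun x => L j x * q' x) (-1) 1 - RInt (fun x => L (S (S j)) x * q' x) (-1) 1.
Proof.
  intros Dq Cq Cq'.
  set (df := fun y => (2 * INR j + 3) * (L (S j) y * q y)
                      + (L (S (S j)) y * q' y - L j y * q' y)).
  assert (HI : is_RInt df (-1) 1 (minus ((L (S (S j)) 1 - L j 1) * q 1)
                                        ((L (S (S j)) (-1) - L j (-1)) * q (-1)))).
  { apply (is_RInt_derive (fun y => (L (S (S j)) y - L j y) * q y) df).
    - intros x _. eapply is_derive_eq.
      + apply is_derive_mult_R; [apply is_derive_minus_R; apply is_derive_Legendre|apply Dq].
      + unfold df. rewrite DLegendre_SS_sub. ring.
    - intros x _. unfold df. solve_continuous. }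
  rewrite !Legendre_at_1, !Legendre_at_m1 in HI.
  replace (minus ((1 - 1) * q 1) (((-1) ^ S (S j) - (-1) ^ j) * q (-1))) with 0 in HI
    by (unfold minus, plus, opp; simpl; ring).
  apply (is_RInt_unique (V := R_CompleteNormedModule)) in HI. unfold df in HI.
  rewrite RInt_plus_R, RInt_scal_R, RInt_minus_R in HI by solve_ex_RInt.
  lra.
Qed.

Lemma RInt_Legendre_poly d : forall (q : R -> R) N, poly_deg_le d q -> (d < N)%nat ->
  RInt (fun x => L N x * q x) (-1) 1 = 0.
Proof.
  induction d as [|d IH]; intros q N Hq HN; (destruct N as [|j]; [lia|]).
  - destruct Hq as [c Hc].
    assert (Z : forall k, RInt (fun x => L k x * 0) (-1) 1 = 0).
    { intros k. rewrite (RInt_ext_R _ (fun _ => 0)) by (intros; ring).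
      rewrite RInt_const. apply Rmult_0_r. }
    pose proof (pos_INR j).
    apply Rmult_eq_reg_l with (2 * INR j + 3); [|lra].
    rewrite (RInt_Legendre_by_parts j q (fun _ => 0)), !Z.
    + ring.
    + intros x. apply (is_derive_ext_R (fun _ => c)); [intros; now rewrite Hc|].
      apply is_derive_const_R.
    + intros x. apply (poly_deg_le_continuous 0). now exists c.
    + intros x. apply continuous_const.
  - destruct (poly_deg_le_derive d q Hq) as (q' & Hq' & Dq).
    pose proof (pos_INR j).
    apply Rmult_eq_reg_l with (2 * INR j + 3); [|lra].
    rewrite (RInt_Legendre_by_parts j q q'), !IH; auto; try lia.
    + ring.
    + intros x. now apply (poly_deg_le_continuous (S d)).
    + intros x. now apply (poly_deg_le_continuous d).
Qed.

Lemma RInt_Legendre_x_Legendre k :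
  RInt (fun x => L (S k) x * (x * L k x)) (-1) 1
  = (INR k + 1) / (2 * INR k + 3) * RInt (fun x => L k x * L k x) (-1) 1.
Proof.
  pose proof (pos_INR k).
  rewrite (RInt_ext_R _ (fun x => (INR k + 2) / (2 * INR k + 3) * (L (S (S k)) x * L k x)
                             + (INR k + 1) / (2 * INR k + 3) * (L k x * L k x))).
  2:{ intros x _. rewrite Legendre_SS. field. lra. }
  rewrite RInt_plus_R, !RInt_scal_R by solve_ex_RInt.
  rewrite (RInt_Legendre_poly k (L k) (S (S k))); [R_eq; ring|apply poly_deg_le_Legendre|lia].
Qed.

Lemma RInt_Legendre_sqr k : RInt (fun x => L k x * L k x) (-1) 1 = 2 / (2 * INR k + 1).
Proof.
  induction k as [|k IH].
  - rewrite (RInt_ext_R _ (fun _ => 1)) by (intros; rewrite Legendre_0; ring).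
    rewrite RInt_const. unfold scal; simpl; unfold mult; simpl. field.
  - pose proof (pos_INR k).
    assert (E : (INR k + 1) * RInt (fun x => L (S k) x * L (S k) x) (-1) 1
                = (2 * INR k + 1) * RInt (fun x => L (S k) x * (x * L k x)) (-1) 1).
    { rewrite <- RInt_scal_R by solve_ex_RInt.
      rewrite (RInt_ext_R _ (fun x => (2 * INR k + 1) * (L (S k) x * (x * L k x))
                                    - INR k * (L (S k) x * L (k - 1) x))).
      2:{ intros x _. pose proof (Legendre_rec k x) as R.
          replace ((INR k + 1) * (L (S k) x * L (S k) x))
            with (L (S k) x * ((INR k + 1) * L (S k) x)) by ring.
          rewrite R. ring. }
      rewrite RInt_minus_R, !RInt_scal_R by solve_ex_RInt.
      rewrite (RInt_Legendre_poly (k - 1) (L (k - 1)) (S k));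
        [ring|apply poly_deg_le_Legendre|lia]. }
    rewrite RInt_Legendre_x_Legendre, IH in E. rewrite S_INR.
    apply Rmult_eq_reg_l with (INR k + 1); [|lra]. rewrite E. field. lra.
Qed.

(** * Termwise integration of Legendre series *)

Lemma ex_series_geom_dom (a : nat -> R) A r :
  0 <= r < 1 -> (forall k, Rabs (a k) <= A * r ^ k) -> ex_series a.
Proof.
  intros Hr Ha. apply ex_series_Rabs.
  apply (ex_series_le (V := R_CompleteNormedModule) _ (fun k => A * r ^ k)).
  - intros k. unfold norm; simpl. rewrite Rabs_Rabsolu. apply Ha.
  - exists (A * / (1 - r)). apply (is_series_scal_l A (fun k => r ^ k)).
    apply is_series_geom. rewrite Rabs_pos_eq; lra.
Qed.

Lemma Series_geom_dom (a : nat -> R) A r :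
  0 <= r < 1 -> (forall k, Rabs (a k) <= A * r ^ k) -> Rabs (Series a) <= A / (1 - r).
Proof.
  intros Hr Ha.
  assert (Hg : is_series (fun k => A * r ^ k) (A / (1 - r))).
  { apply (is_series_scal_l A (fun k => r ^ k)). apply is_series_geom. rewrite Rabs_pos_eq; lra. }
  assert (Ex : ex_series (fun k => Rabs (a k))).
  { apply (ex_series_geom_dom _ A r Hr). intros k. rewrite Rabs_Rabsolu. apply Ha. }
  eapply Rle_trans; [now apply Series_Rabs|].
  rewrite <- (is_series_unique _ _ Hg). apply Series_le; [|now exists (A / (1 - r))].
  intros k. split; [apply Rabs_pos|apply Ha].
Qed.

Lemma Series_geom_dom_tail (a : nat -> R) A r N :
  0 <= r < 1 -> (forall k, Rabs (a k) <= A * r ^ k) ->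
  Rabs (Series (fun k => a (N + k)%nat)) <= A * r ^ N / (1 - r).
Proof.
  intros Hr Ha. apply Series_geom_dom; [exact Hr|].
  intros k. rewrite Rmult_assoc, <- pow_add. apply Ha.
Qed.

Lemma is_series_geom_dom_vanishing (a : nat -> R) l A r d :
  0 <= r < 1 -> (forall k, Rabs (a k) <= A * r ^ k) -> (forall k, (k < d)%nat -> a k = 0) ->
  is_series a l -> Rabs l <= A * r ^ d / (1 - r).
Proof.
  intros Hr Ha Hz Hl. rewrite <- (is_series_unique _ _ Hl), (Series_incr_n_aux a d Hz).
  now apply Series_geom_dom_tail.
Qed.

Lemma filterlim_uniform_rate (f : nat -> R -> R) (g : R -> R) (e : nat -> R) :
  is_lim_seq e 0 -> (forall N x, Rabs (f N x - g x) <= e N) ->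
  filterlim f eventually (locally g).
Proof.
  intros He Hf. apply filterlim_locally. intros eps.
  apply is_lim_seq_spec in He. destruct (He eps) as [N0 HN0].
  exists N0. intros N HN t. specialize (HN0 N HN). rewrite Rminus_0_r in HN0.
  change (Rabs (f N t - g t) < eps).
  eapply Rle_lt_trans; [apply Hf|]. eapply Rle_lt_trans; [apply Rle_abs|exact HN0].
Qed.

Definition clamp (x : R) := Rmax (-1) (Rmin 1 x).

Lemma clamp_in x : -1 <= clamp x <= 1.
Proof. unfold clamp, Rmax, Rmin. repeat destruct Rle_dec; lra. Qed.

Lemma clamp_id x : -1 <= x <= 1 -> clamp x = x.
Proof. intros. unfold clamp, Rmax, Rmin. repeat destruct Rle_dec; lra. Qed.

Definition Legendre_partial_sum (c : nat -> R) N x := sum_n (fun k => c k * L k x) N.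

Lemma Legendre_partial_sum_continuous c N (x : R) : continuous (Legendre_partial_sum c N) x.
Proof.
  induction N as [|N IH].
  - apply (continuous_ext (fun y => c 0%nat * L 0 y)).
    + intros y. unfold Legendre_partial_sum. now rewrite sum_O.
    + solve_continuous.
  - apply (continuous_ext (fun y => Legendre_partial_sum c N y + c (S N) * L (S N) y)).
    + intros y. unfold Legendre_partial_sum. now rewrite sum_Sn.
    + apply continuous_plus_R; [exact IH|solve_continuous].
Qed.

Lemma RInt_Legendre_partial_sum c N (g : R -> R) : (forall x, continuous g x) ->
  RInt (fun x => Legendre_partial_sum c N x * g x) (-1) 1
  = sum_n (fun k => c k * RInt (fun x => L k x * g x) (-1) 1) N.
Proof.
  intros Cg. pose proof (Legendre_partial_sum_continuous c) as CP.
  induction N as [|N IH].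
  - rewrite sum_O, <- RInt_scal_R by solve_ex_RInt.
    apply RInt_ext_R. intros x _. unfold Legendre_partial_sum. rewrite sum_O. ring.
  - pose proof (CP N) as CPN.
    rewrite sum_Sn, <- IH, <- RInt_scal_R by solve_ex_RInt.
    change (plus ?a ?b) with (a + b). rewrite <- RInt_plus_R by solve_ex_RInt.
    apply RInt_ext_R. intros x _. unfold Legendre_partial_sum. rewrite sum_Sn.
    change (plus ?a ?b) with (a + b). ring.
Qed.

Lemma Legendre_series_tail c K r N y :
  0 <= r < 1 -> (forall k, Rabs (c k) <= K * r ^ k) -> -1 <= y <= 1 ->
  Rabs (leg_series c y - Legendre_partial_sum c N y) <= K * r ^ S N / (1 - r).
Proof.
  intros Hr Hc Hy.
  assert (Ha : forall k, Rabs (c k * L k y) <= K * r ^ k).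
  { intros k. rewrite Rabs_mult. pose proof (Legendre_bound k y Hy).
    pose proof (Rabs_pos (c k)). pose proof (Rabs_pos (L k y)). specialize (Hc k). nra. }
  unfold leg_series, Legendre_partial_sum.
  rewrite (Series_incr_n _ (S N)), sum_n_Reals by (eauto using ex_series_geom_dom; lia).
  simpl pred. replace (_ + _ - _) with (Series (fun k => c (S N + k)%nat * L (S N + k) y)) by ring.
  exact (Series_geom_dom_tail (fun k => c k * L k y) K r (S N) Hr Ha).
Qed.

Lemma continuous_bounded_on_11 (g : R -> R) : (forall x, continuous g x) ->
  exists B, forall x, -1 <= x <= 1 -> Rabs (g x) <= B.
Proof.
  intros Cg.
  destruct (continuity_ab_maj (fun x => Rabs (g x)) (-1) 1) as (M & HM & _); [lra| |].
  - intros x _. apply (continuity_pt_comp g Rabs); [|apply Rcontinuity_abs].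
    apply continuity_pt_filterlim, Cg.
  - now exists (Rabs (g M)).
Qed.

(* Clamped to [[-1, 1]], the convergence is uniform on all of [R], as [filterlim_RInt] requires. *)
Lemma filterlim_clamped_Legendre_partial_sum c K r (g : R -> R) :
  0 <= r < 1 -> (forall k, Rabs (c k) <= K * r ^ k) -> (forall x, continuous g x) ->
  filterlim (fun N x => Legendre_partial_sum c N (clamp x) * g (clamp x)) eventually
            (locally (fun x => leg_series c (clamp x) * g (clamp x))).
Proof.
  intros Hr Hc Cg. destruct (continuous_bounded_on_11 g Cg) as [B Hg].
  apply (filterlim_uniform_rate _ _ (fun N => B * (K * r / (1 - r)) * r ^ N)).
  - replace (Finite 0) with (Rbar_mult (B * (K * r / (1 - r))) 0) by (simpl; f_equal; ring).
    apply is_lim_seq_scal_l, is_lim_seq_geom. rewrite Rabs_pos_eq; lra.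
  - intros N x.
    replace (_ - _) with (g (clamp x) * - (leg_series c (clamp x)
                            - Legendre_partial_sum c N (clamp x))) by ring.
    rewrite Rabs_mult, Rabs_Ropp.
    replace (B * (K * r / (1 - r)) * r ^ N) with (B * (K * r ^ S N / (1 - r)))
      by (simpl; field; lra).
    apply Rmult_le_compat; [apply Rabs_pos|apply Rabs_pos|now apply Hg, clamp_in|].
    now apply Legendre_series_tail, clamp_in.
Qed.

Lemma is_series_RInt_Legendre_series c K r (g : R -> R) :
  0 <= r < 1 -> (forall k, Rabs (c k) <= K * r ^ k) -> (forall x, continuous g x) ->
  is_series (fun k => c k * RInt (fun x => L k x * g x) (-1) 1)
            (RInt (fun x => leg_series c x * g x) (-1) 1).
Proof.
  intros Hr Hc Cg.
  assert (HF : forall N, is_RInt (fun x => Legendre_partial_sum c N (clamp x) * g (clamp x)) (-1) 1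
                 (sum_n (fun k => c k * RInt (fun x => L k x * g x) (-1) 1) N)).
  { intros N. apply (is_RInt_ext (fun x => Legendre_partial_sum c N x * g x)).
    - intros x Hx. rewrite Rmin_left, Rmax_right in Hx by lra. now rewrite clamp_id by lra.
    - rewrite <- RInt_Legendre_partial_sum by exact Cg.
      apply (RInt_correct (V := R_CompleteNormedModule)).
      pose proof (Legendre_partial_sum_continuous c N). solve_ex_RInt. }
  destruct (filterlim_RInt (V := R_CompleteNormedModule) _ (-1) 1 eventually eventually_filter
              _ _ HF (filterlim_clamped_Legendre_partial_sum c K r g Hr Hc Cg))
    as (I & HI & HIR).
  replace (RInt (fun x => leg_series c x * g x) (-1) 1) with I; [exact HI|].
  symmetry. apply (is_RInt_unique (V := R_CompleteNormedModule)).
  apply (is_RInt_ext (fun x => leg_series c (clamp x) * g (clamp x))); [|exact HIR].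
  intros x Hx. rewrite Rmin_left, Rmax_right in Hx by lra. now rewrite clamp_id by lra.
Qed.

Lemma RInt_Legendre_series_bound c K r (g : R -> R) M d :
  0 <= r < 1 -> (forall k, Rabs (c k) <= K * r ^ k) -> (forall x, continuous g x) ->
  (forall k, (k < d)%nat -> RInt (fun x => L k x * g x) (-1) 1 = 0) ->
  (forall k, Rabs (RInt (fun x => L k x * g x) (-1) 1) <= M) ->
  Rabs (RInt (fun x => leg_series c x * g x) (-1) 1) <= M * K * r ^ d / (1 - r).
Proof.
  intros Hr Hc Cg Hz HM.
  apply (is_series_geom_dom_vanishing (fun k => c k * RInt (fun x => L k x * g x) (-1) 1));
    [exact Hr| | |now apply (is_series_RInt_Legendre_series c K r g)].
  - intros k. rewrite Rabs_mult. pose proof (Rabs_pos (c k)).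
    pose proof (Rabs_pos (RInt (fun x => L k x * g x) (-1) 1)).
    specialize (Hc k). specialize (HM k). replace (M * K * r ^ k) with ((K * r ^ k) * M) by ring.
    now apply Rmult_le_compat.
  - intros k Hk. rewrite Hz by exact Hk. apply Rmult_0_r.
Qed.

(** * The Babuska-Shen basis and the entries [a_{m,n}] *)

Definition bs_scale (m : nat) := sqrt (4 * INR m - 2).

Lemma bs_scale_sqr j : bs_scale (S (S j)) * bs_scale (S (S j)) = 2 * (2 * INR j + 3).
Proof.
  unfold bs_scale. rewrite sqrt_sqrt; rewrite !S_INR; pose proof (pos_INR j); lra.
Qed.

Lemma bs_scale_ge_2 j : 2 <= bs_scale (S (S j)).
Proof.
  pose proof (bs_scale_sqr j). pose proof (sqrt_pos (4 * INR (S (S j)) - 2)).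
  pose proof (pos_INR j). unfold bs_scale in *. nra.
Qed.

Lemma bs_eta_SS j x : bs_eta (S (S j)) x = / bs_scale (S (S j)) * (L j x - L (S (S j)) x).
Proof. unfold bs_eta. now replace (S (S j) - 2)%nat with j by lia. Qed.

Lemma Derive_bs_eta j x :
  Derive (bs_eta (S (S j))) x = - (2 * INR j + 3) / bs_scale (S (S j)) * L (S j) x.
Proof.
  pose proof (bs_scale_ge_2 j).
  apply is_derive_unique.
  apply (is_derive_ext_R (fun y => / bs_scale (S (S j)) * (L j y - L (S (S j)) y))).
  { intros y. now rewrite bs_eta_SS. }
  eapply is_derive_eq.
  - apply is_derive_scal_R, is_derive_minus_R; apply is_derive_Legendre.
  - replace (DLegendre j x - DLegendre (S (S j)) x)
      with (- (DLegendre (S (S j)) x - DLegendre j x)) by ring.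
    rewrite DLegendre_SS_sub. field. lra.
Qed.

Lemma continuous_bs_eta j (x : R) : continuous (bs_eta (S (S j))) x.
Proof.
  apply (continuous_ext (fun y => / bs_scale (S (S j)) * (L j y - L (S (S j)) y))).
  - intros y. now rewrite bs_eta_SS.
  - solve_continuous.
Qed.

Lemma continuous_Derive_bs_eta j (x : R) : continuous (Derive (bs_eta (S (S j)))) x.
Proof.
  apply (continuous_ext (fun y => - (2 * INR j + 3) / bs_scale (S (S j)) * L (S j) y)).
  - intros y. now rewrite Derive_bs_eta.
  - solve_continuous.
Qed.

Lemma bs_eta_bound j x : -1 <= x <= 1 -> Rabs (bs_eta (S (S j)) x) <= 1.
Proof.
  intros Hx. rewrite bs_eta_SS. pose proof (bs_scale_ge_2 j).
  rewrite Rabs_mult, Rabs_inv, (Rabs_pos_eq (bs_scale _)) by lra.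
  pose proof (Legendre_bound j x Hx). pose proof (Legendre_bound (S (S j)) x Hx).
  assert (Rabs (L j x - L (S (S j)) x) <= 2).
  { eapply Rle_trans; [apply Rabs_triang|]. rewrite Rabs_Ropp. lra. }
  apply Rmult_le_reg_l with (bs_scale (S (S j))); [lra|].
  rewrite <- Rmult_assoc, Rinv_r by lra. lra.
Qed.

Lemma RInt_Derive_bs_eta_sqr j :
  RInt (fun x => Derive (bs_eta (S (S j))) x * Derive (bs_eta (S (S j))) x) (-1) 1 = 1.
Proof.
  pose proof (bs_scale_ge_2 j). pose proof (bs_scale_sqr j). pose proof (pos_INR j).
  rewrite (RInt_ext_R _ (fun x => (2 * INR j + 3) ^ 2 / (bs_scale (S (S j)) * bs_scale (S (S j)))
                                   * (L (S j) x * L (S j) x))).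
  2:{ intros x _. rewrite Derive_bs_eta. field. lra. }
  rewrite RInt_scal_R, RInt_Legendre_sqr by solve_ex_RInt.
  rewrite S_INR. R_eq. field_simplify_eq; [|lra]. nra.
Qed.

Lemma abs_mult_le_half_sqr a P Q : Rabs a <= 1 -> Rabs (a * (P * Q)) <= (P * P + Q * Q) / 2.
Proof.
  intros Ha. rewrite !Rabs_mult.
  assert (HPQ : Rabs P * Rabs Q <= (P * P + Q * Q) / 2).
  { rewrite <- (Rabs_mult P Q). pose proof (pow2_ge_0 (P - Q)). pose proof (pow2_ge_0 (P + Q)).
    apply Rabs_le. nra. }
  pose proof (Rabs_pos a). pose proof (Rabs_pos P). pose proof (Rabs_pos Q). nra.
Qed.

Lemma stiffness_term_bound nu K r j l :
  0 <= r < 1 -> (forall k, Rabs (nu k) <= K * r ^ k) -> (j <= l)%nat ->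
  Rabs (RInt (fun x => leg_series nu x * Derive (bs_eta (S (S j))) x
                                        * Derive (bs_eta (S (S l))) x) (-1) 1)
  <= K * r ^ (l - j) / (1 - r).
Proof.
  intros Hr Hnu Hjl.
  set (Dm := Derive (bs_eta (S (S j)))); set (Dn := Derive (bs_eta (S (S l)))).
  pose proof (continuous_Derive_bs_eta j) as Cm. pose proof (continuous_Derive_bs_eta l) as Cn.
  fold Dm in Cm. fold Dn in Cn.
  rewrite (RInt_ext_R _ (fun x => leg_series nu x * (Dm x * Dn x))) by (intros; ring).
  rewrite <- (Rmult_1_l K).
  apply RInt_Legendre_series_bound; [exact Hr|exact Hnu|intros; solve_continuous| |].
  - intros k Hk.
    set (cm := - (2 * INR j + 3) / bs_scale (S (S j))).
    set (cn := - (2 * INR l + 3) / bs_scale (S (S l))).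
    rewrite (RInt_ext_R _ (fun x => L (S l) x * (cm * cn * (L k x * L (S j) x)))).
    2:{ intros x _. unfold Dm, Dn. rewrite !Derive_bs_eta. fold cm cn. ring. }
    apply (RInt_Legendre_poly (k + S j)); [|lia].
    apply poly_deg_le_scal, poly_deg_le_mult; apply poly_deg_le_Legendre.
  - intros k.
    eapply Rle_trans; [apply abs_RInt_le; [lra|solve_ex_RInt]|].
    apply Rle_trans with (RInt (fun x => / 2 * (Dm x * Dm x) + / 2 * (Dn x * Dn x)) (-1) 1).
    + apply RInt_le; [lra|solve_ex_RInt|solve_ex_RInt|].
      intros x Hx. replace (/ 2 * (Dm x * Dm x) + / 2 * (Dn x * Dn x))
        with ((Dm x * Dm x + Dn x * Dn x) / 2) by field.
      apply abs_mult_le_half_sqr, Legendre_bound. lra.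
    + rewrite RInt_plus_R, !RInt_scal_R by solve_ex_RInt.
      unfold Dm, Dn. rewrite !RInt_Derive_bs_eta_sqr. lra.
Qed.

Lemma mass_term_bound sg K r j l :
  0 <= r < 1 -> (forall k, Rabs (sg k) <= K * r ^ k) -> (j <= l)%nat ->
  Rabs (RInt (fun x => leg_series sg x * bs_eta (S (S j)) x * bs_eta (S (S l)) x) (-1) 1)
  <= 2 * K * r ^ (l - j - 2) / (1 - r).
Proof.
  intros Hr Hsg Hjl.
  set (Em := bs_eta (S (S j))); set (En := bs_eta (S (S l))).
  pose proof (continuous_bs_eta j) as Cm. pose proof (continuous_bs_eta l) as Cn.
  fold Em in Cm. fold En in Cn.
  rewrite (RInt_ext_R _ (fun x => leg_series sg x * (Em x * En x))) by (intros; ring).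
  apply RInt_Legendre_series_bound; [exact Hr|exact Hsg|intros; solve_continuous| |].
  - intros k Hk.
    set (q := fun x => / bs_scale (S (S l)) * (L k x * Em x)).
    assert (Hq : poly_deg_le (k + S (S j)) q).
    { apply poly_deg_le_scal, poly_deg_le_mult; [apply poly_deg_le_Legendre|].
      apply (poly_deg_le_ext _ (fun x => / bs_scale (S (S j)) * (L j x - L (S (S j)) x))).
      { intros x. unfold Em. now rewrite bs_eta_SS. }
      apply poly_deg_le_scal, poly_deg_le_minus; [|apply poly_deg_le_Legendre].
      apply poly_deg_le_weaken with j; [lia|apply poly_deg_le_Legendre]. }
    rewrite (RInt_ext_R _ (fun x => L l x * q x - L (S (S l)) x * q x)).
    2:{ intros x _. unfold q, En. rewrite bs_eta_SS. ring. }
    assert (Cq : forall x, continuous q x) by (intros; now apply (poly_deg_le_continuous _ _ _ Hq)).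
    rewrite RInt_minus_R by solve_ex_RInt.
    rewrite !(RInt_Legendre_poly _ q _ Hq) by lia. R_eq. ring.
  - intros k. apply Rle_trans with ((1 - -1) * 1); [|lra].
    apply abs_RInt_le_const; [lra|solve_ex_RInt|].
    intros x Hx. unfold Em, En. rewrite !Rabs_mult.
    pose proof (Legendre_bound k x Hx). pose proof (bs_eta_bound j x Hx).
    pose proof (bs_eta_bound l x Hx). pose proof (Rabs_pos (L k x)).
    pose proof (Rabs_pos (bs_eta (S (S j)) x)). pose proof (Rabs_pos (bs_eta (S (S l)) x)).
    assert (Rabs (bs_eta (S (S j)) x) * Rabs (bs_eta (S (S l)) x) <= 1) by nra.
    nra.
Qed.

Lemma a_mn_sym nu sigma m n : a_mn nu sigma m n = a_mn nu sigma n m.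
Proof. unfold a_mn. f_equal; apply RInt_ext_R; intros; ring. Qed.

Lemma pow_le_pow_of_le_1 r a b : 0 <= r <= 1 -> (a <= b)%nat -> r ^ b <= r ^ a.
Proof.
  intros Hr Hab. replace b with (a + (b - a))%nat by lia. rewrite pow_add.
  pose proof (pow_le r a (proj1 Hr)). pose proof (pow_incr r 1 (b - a) Hr).
  rewrite pow1 in *. nra.
Qed.

Lemma pow_sub2_le r d : 0 < r <= 1 -> r ^ (d - 2) <= r ^ d / (r * r).
Proof.
  intros Hr. apply Rmult_le_reg_r with (r * r); [nra|].
  unfold Rdiv. rewrite Rmult_assoc, Rinv_l, Rmult_1_r by nra.
  replace (r * r) with (r ^ 2) by ring. rewrite <- pow_add.
  apply pow_le_pow_of_le_1; [lra|lia].
Qed.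

Lemma exp_mult_INR e k : exp (e * INR k) = exp e ^ k.
Proof. rewrite <- Rpower_pow by apply exp_pos. unfold Rpower. now rewrite ln_exp, Rmult_comm. Qed.

Lemma a_mn_bound_le nu sigma K r m n :
  0 < r < 1 -> (forall k, Rabs (nu k) <= K * r ^ k) -> (forall k, Rabs (sigma k) <= K * r ^ k) ->
  (2 <= m)%nat -> (m <= n)%nat ->
  Rabs (a_mn nu sigma m n) <= K * (1 + 2 / (r * r)) / (1 - r) * r ^ (n - m).
Proof.
  intros Hr Hnu Hsg Hm Hmn.
  destruct m as [|[|j]]; [lia|lia|]. destruct n as [|[|l]]; [lia|lia|].
  replace (S (S l) - S (S j))%nat with (l - j)%nat by lia.
  assert (Hjl : (j <= l)%nat) by lia.
  pose proof (stiffness_term_bound nu K r j l ltac:(lra) Hnu Hjl) as Hstiff.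
  pose proof (mass_term_bound sigma K r j l ltac:(lra) Hsg Hjl) as Hmass.
  assert (HK : 0 <= K).
  { specialize (Hnu 0%nat). pose proof (Rabs_pos (nu 0%nat)). simpl in Hnu. lra. }
  assert (Hmass' : 2 * K * r ^ (l - j - 2) / (1 - r) <= 2 * K * (r ^ (l - j) / (r * r)) / (1 - r)).
  { apply Rmult_le_compat_r; [apply Rlt_le, Rinv_0_lt_compat; lra|].
    apply Rmult_le_compat_l; [lra|]. apply pow_sub2_le. lra. }
  unfold a_mn. eapply Rle_trans; [apply Rabs_triang|].
  replace (K * (1 + 2 / (r * r)) / (1 - r) * r ^ (l - j))
    with (K * r ^ (l - j) / (1 - r) + 2 * K * (r ^ (l - j) / (r * r)) / (1 - r))
    by (field; split; nra).
  lra.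
Qed.

Lemma exp_neg_dist eta m n : (m <= n)%nat ->
  exp (- eta * Rabs (INR n - INR m)) = exp (- eta) ^ (n - m).
Proof.
  intros Hmn. rewrite Rabs_pos_eq by (apply Rge_le, Rge_minus, Rle_ge, le_INR; exact Hmn).
  rewrite <- minus_INR by exact Hmn. apply exp_mult_INR.
Qed.

Theorem mainTheorem4 :
  forall (eta C_eta : R), 0 < eta -> 0 < C_eta ->
  exists C : R, 0 < C /\
    forall nu sigma : nat -> R,
      (forall k : nat, Rabs (nu k) <= C_eta * exp (- eta * INR k)) ->
      (forall k : nat, Rabs (sigma k) <= C_eta * exp (- eta * INR k)) ->
      forall m n : nat, (2 <= m)%nat -> (2 <= n)%nat ->
        Rabs (a_mn nu sigma m n) <= C * exp (- eta * Rabs (INR n - INR m)).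
Proof.
  intros eta Ce Heta HCe.
  set (r := exp (- eta)).
  assert (Hr : 0 < r < 1).
  { split; [apply exp_pos|]. rewrite <- exp_0. apply exp_increasing. lra. }
  exists (Ce * (1 + 2 / (r * r)) / (1 - r)). split.
  { apply Rdiv_lt_0_compat; [|lra]. apply Rmult_lt_0_compat; [exact HCe|].
    assert (0 < 2 / (r * r)) by (apply Rdiv_lt_0_compat; nra). lra. }
  intros nu sigma Hnu Hsg m n Hm Hn.
  setoid_rewrite exp_mult_INR in Hnu. setoid_rewrite exp_mult_INR in Hsg.
  destruct (Nat.le_ge_cases m n) as [Hmn|Hnm].
  - rewrite exp_neg_dist by exact Hmn. now apply a_mn_bound_le.
  - rewrite a_mn_sym, Rabs_minus_sym, exp_neg_dist by exact Hnm. now apply a_mn_bound_le.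
Qed.
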